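(* Let $Q$ be an $m\times N$ real matrix with columns indexed by a set $U$, and let $\gamma>0$, $C>0$. Suppose that for any fixed $U'\subseteq U$ there is an online factorization algorithm that solves the $(\gamma,C)$-bounded online average factorization problem for $Q|_{U'}$. Then there exists an online factorization algorithm that solves the $(\gamma,C')$-bounded online average factorization problem with insertions for $Q$, with $C'\le C\log_2(2N)$.
   Context: For a matrix, $\|L\|_{2\to\infty}$ is the maximum $\ell_2$ norm of a row, $\|R\|_{1\to2}$ the maximum $\ell_2$ norm of a column, $\|R\|_F$ the Frobenius norm, $\gamma_2(A)=\min\{\|L\|_{2\to\infty}\|R\|_{1\to2}:LR=A\}$; rows $q_1,q_2,\ldots$ of $Q$ arrive online and $Q_t$ is the first $t$ rows. For $U'\subseteq U$, $Q|_{U'}$ is $Q$ with all entries in columns outside $U'$ replaced by $0$. For a sequence $\mathcal{U}=(U_0,\ldots,U_m)$ of subsets of $U$, $Q|_{\mathcal{U}}$ is $Q$ with, in each row $i$, the entries in columns outside $U_i$ replaced by $0$; $\mathcal{U}$ is insertion-only if $U_0\subseteq U_1\subseteq\cdots$. The $(\gamma,C)$-bounded online average factorization problem for $Q|_{U'}$: the algorithm chooses an initial (possibly empty) $R_0$; at each time $t$ it receives the $t$-th row of $Q|_{U'}$ and either (i) appends rows to $R_{t-1}$ to form $R_t$ and outputs $\ell_t$ with $\ell_tR_t$ equal to that row, with $\|R_t\|_F\le\sqrt{|U'|}$ and $\|L_t\|_{2\to\infty}\le C\gamma$ ($L_t$ having zero-padded rows $\ell_1,\ldots,\ell_t$), or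 (ii) correctly asserts that $\gamma_2$ of its first $t$ rows exceeds $\gamma$. The $(\gamma,C)$-bounded online average factorization problem with insertions for $Q$: at each time $t$ the algorithm receives $q_t$ and a set $U_t\subseteq U$, where $(U_0,U_1,\ldots)$ is insertion-only, and must either correctly assert $\gamma_2(Q_t)>\gamma$, or compute an online factorization $L_tR_t=Q_t|_{(U_0,\ldots,U_t)}$ ($R_t$ obtained from $R_{t-1}$ by appending rows, $\ell_t$ the new last row of $L_t$) with $\|L_t\|_{2\to\infty}\le C\gamma$, $\|R_t\|_F\le\sqrt{|U_t|}$, and all rows of $R_t$ supported on $U_t$. *)

From HB Require Import structures.
From mathcomp Require Import all_boot all_order all_algebra.
From mathcomp Require Import classical_sets reals exp.
Set Implicit Arguments.
Unset Strict Implicit.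
Unset Printing Implicit Defensive.
Import Order.TTheory GRing.Theory Num.Theory.
Local Open Scope ring_scope.
Local Open Scope classical_set_scope.

Section Defs.
Variable R : realType.

Definition norm2inf (p k : nat) (L : 'M[R]_(p, k)) : R :=
  \big[Num.max/0]_(i < p) Num.sqrt (\sum_(j < k) L i j ^+ 2).

Definition norm12 (k n : nat) (M : 'M[R]_(k, n)) : R :=
  \big[Num.max/0]_(j < n) Num.sqrt (\sum_(i < k) M i j ^+ 2).

(* gamma_2(A) = min over all factorizations L R = A (any inner dimension k)
   of ||L||_{2->oo} ||R||_{1->2}; written as an infimum (the min is attained). *)
Definition gamma2 (p n : nat) (A : 'M[R]_(p, n)) : R :=
  inf [set x : R | exists k (L : 'M[R]_(p, k)) (M : 'M[R]_(k, n)),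
                     L *m M = A /\ x = norm2inf L * norm12 M].

Definition mx_of_rows (n : nat) (rs : seq 'rV[R]_n) : 'M[R]_(size rs, n) :=
  \matrix_(i < size rs, j < n) (nth 0 rs i) 0 j.

Definition gamma2_rows (n : nat) (rs : seq 'rV[R]_n) : R := gamma2 (mx_of_rows rs).

Definition rows_of (m n : nat) (A : 'M[R]_(m, n)) : seq 'rV[R]_n :=
  [seq row i A | i <- enum 'I_m].

(* Q|_{U'} : zero out the columns outside U' *)
Definition restr (m n : nat) (A : 'M[R]_(m, n)) (U' : {set 'I_n}) : 'M[R]_(m, n) :=
  \matrix_(i, j) (if j \in U' then A i j else 0).

Definition restr_row (n : nat) (q : 'rV[R]_n) (U' : {set 'I_n}) : 'rV[R]_n :=
  \row_j (if j \in U' then q 0 j else 0).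

(* Output of an online factorization algorithm at one time step:
   either assert "gamma_2 of the rows so far exceeds gamma", or append the rows
   [newR] to the current right factor and output the new left row [ell]
   (coefficients w.r.t. all rows of the current right factor). *)
Inductive out (n : nat) : Type :=
  | Assert : out n
  | Step : seq 'rV[R]_n -> seq R -> out n.

Definition is_step (n : nat) (o : out n) : bool :=
  if o is Step _ _ then true else false.
Definition new_rows (n : nat) (o : out n) : seq 'rV[R]_n :=
  if o is Step nr _ then nr else [::].
Definition ell_of (n : nat) (o : out n) : seq R :=
  if o is Step _ l then l else [::].

Definition norm2 (l : seq R) : R := Num.sqrt (\sum_(x <- l) x ^+ 2).

Definition frob (n : nat) (rs : seq 'rV[R]_n) : R :=
  Num.sqrt (\sum_(r <- rs) \sum_(j < n) r 0 j ^+ 2).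

Definition lincomb (n : nat) (l : seq R) (rs : seq 'rV[R]_n) : 'rV[R]_n :=
  \sum_(i < size rs) nth 0 l i *: nth 0 rs i.

(* An online algorithm maps the prefix of rows received so far to its output;
   on the empty prefix its [new_rows] are the initial right factor R_0. *)
Definition online_alg (n : nat) := seq 'rV[R]_n -> out n.

Definition Rfactor (n : nat) (alg : online_alg n) (ins : seq 'rV[R]_n) (t : nat)
  : seq 'rV[R]_n :=
  flatten [seq new_rows (alg (take k ins)) | k <- iota 0 t.+1].

(* alg solves the (gamma,C)-bounded online average factorization problem for the
   m x n matrix A, where the Frobenius budget is [budget] (= sqrt |U'|). *)
Definition solves_avg (m n : nat) (alg : online_alg n) (A : 'M[R]_(m, n))
  (gamma C budget : R) : Prop :=
  let ins := rows_of A in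
  forall t : nat, (0 < t <= m)%N ->
    (forall s : nat, (0 < s < t)%N -> is_step (alg (take s ins))) ->
    match alg (take t ins) return Prop with
    | Assert => gamma < gamma2_rows (take t ins)
    | Step _ l =>
        [/\ size l = size (Rfactor alg ins t),
            lincomb l (Rfactor alg ins t) = nth 0 ins t.-1,
            frob (Rfactor alg ins t) <= budget
          & forall s : nat, (0 < s <= t)%N ->
              norm2 (ell_of (alg (take s ins))) <= C * gamma]
    end.

(* The algorithm sees the sets U_0, ..., U_t and the rows q_1, ..., q_t. *)
Definition online_alg_ins (n : nat) := seq {set 'I_n} -> seq 'rV[R]_n -> out n.

Definition sets_upto (n : nat) (U : nat -> {set 'I_n}) (t : nat) : seq {set 'I_n} :=
  [seq U k | k <- iota 0 t.+1].

Definition Rfactor_ins (n : nat) (alg : online_alg_ins n) (U : nat -> {set 'I_n})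
  (ins : seq 'rV[R]_n) (t : nat) : seq 'rV[R]_n :=
  flatten [seq new_rows (alg (sets_upto U k) (take k ins)) | k <- iota 0 t.+1].

Definition insertion_only (n : nat) (U : nat -> {set 'I_n}) : Prop :=
  forall t : nat, U t \subset U t.+1.

Definition solves_avg_ins (m n : nat) (alg : online_alg_ins n) (Q : 'M[R]_(m, n))
  (gamma C : R) : Prop :=
  let ins := rows_of Q in
  forall U : nat -> {set 'I_n}, insertion_only U ->
  forall t : nat, (0 < t <= m)%N ->
    (forall s : nat, (0 < s < t)%N -> is_step (alg (sets_upto U s) (take s ins))) ->
    match alg (sets_upto U t) (take t ins) return Prop with
    | Assert => gamma < gamma2_rows (take t ins)
    | Step _ l =>
        [/\ size l = size (Rfactor_ins alg U ins t),
            lincomb l (Rfactor_ins alg U ins t) = restr_row (nth 0 ins t.-1) (U t),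
            frob (Rfactor_ins alg U ins t) <= Num.sqrt (#|U t|%:R),
            (forall r, r \in Rfactor_ins alg U ins t ->
                forall j : 'I_n, j \notin U t -> r 0 j = 0)
          & forall s : nat, (0 < s <= t)%N ->
              norm2 (ell_of (alg (sets_upto U s) (take s ins))) <= C * gamma]
    end.

Definition log2 (x : R) : R := ln x / ln 2.

End Defs.

(* Keep the columns of U_t in order of arrival and cut the first |U_t| positions
   into dyadic blocks following the binary expansion of |U_t|: each column of U_t
   lies in exactly one active block, and at most one block per level is active,
   with K = floor(log2 N) + 1 <= log2(2N) levels. Since the order only grows at
   its end, an active block keeps its column set forever; each block runs the
   given algorithm on Q restricted to its columns, and q_t|U_t is the sum over
   the active blocks of the factorizations they produce. Rows are scaled by
   1/sqrt K and coefficients by sqrt K. A block that has been active is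
   aligned at a multiple of twice its length, so a column lies in at most K such
   blocks and the Frobenius norm stays below sqrt |U_t|; at most K blocks
   contribute to a coefficient vector, each with norm at most sqrt K C gamma.
   The algorithm asserts exactly when gamma_2 of the prefix exceeds gamma;
   otherwise no restricted run asserts, as restricting columns does not
   increase gamma_2. *)

From mathcomp Require Import all_boot all_order all_algebra zify.
From mathcomp Require Import boolp reals exp.
Set Implicit Arguments. Unset Strict Implicit. Unset Printing Implicit Defensive.
Import Order.TTheory GRing.Theory Num.Theory.

Definition dyadic_lo (n j : nat) : nat := n %/ 2 ^ j.+1 * 2 ^ j.+1.

Definition in_dyadic_block (n r j : nat) : bool :=
  odd (n %/ 2 ^ j) && (dyadic_lo n j <= r < dyadic_lo n j + 2 ^ j).

Lemma dyadic_lo_addn_le n j : odd (n %/ 2 ^ j) -> dyadic_lo n j + 2 ^ j <= n.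
Proof.
move=> hodd; have := leq_divM n (2 ^ j).
rewrite /dyadic_lo expnSr divnMA {1}(divn_eq (n %/ 2 ^ j) 2) modn2 hodd; lia.
Qed.

Lemma in_dyadic_blockS n r j :
  in_dyadic_block n r j.+1 = in_dyadic_block (n %/ 2) (r %/ 2) j.
Proof.
have halve i : n %/ 2 ^ i.+1 = n %/ 2 %/ 2 ^ i by rewrite expnS divnMA.
rewrite /in_dyadic_block /dyadic_lo !halve leq_divRL // ltn_divLR //.
by rewrite mulnDl -!mulnA -!expnSr.
Qed.

Lemma in_dyadic_block0 n r : in_dyadic_block n r 0 = odd n && (r == n.-1).
Proof.
rewrite /in_dyadic_block /dyadic_lo !expn0 !expn1 divn1.
by have := odd_double_half n; case: (odd n) => /= h; apply/idP/idP; lia.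
Qed.

Lemma in_dyadic_block_lt n r j : in_dyadic_block n r j -> r < n.
Proof. by case/andP=> /dyadic_lo_addn_le hle /andP[_ hr]; lia. Qed.

Lemma sum_in_dyadic_block K n r : r < n -> n < 2 ^ K ->
  \sum_(j < K) in_dyadic_block n r j = 1.
Proof.
elim: K n r => [|K IH] n r hr hn; first by rewrite expn0 in hn; lia.
rewrite big_ord_recl in_dyadic_block0.
under eq_bigr => j _ do rewrite /bump /= in_dyadic_blockS.
have := odd_double_half n.
case: (boolP (odd n && (r == n.-1))) => [/andP[-> /eqP->] | hlast] hn2 /=.
  rewrite big1 // => j _; case E: in_dyadic_block => //; move/in_dyadic_block_lt: E; lia.
by apply: IH; move: hlast hn; rewrite expnS; case: (odd n) hn2 => /=; lia.
Qed.

Lemma dyadic_lo_aligned lo j r : 2 ^ j.+1 %| lo -> lo <= r < lo + 2 ^ j ->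
  dyadic_lo r j = lo.
Proof.
move=> /divnK <-; set a := lo %/ _; case/andP=> h1 h2; congr (_ * _); apply/eqP.
rewrite eqn_leq leq_divRL ?expn_gt0 // h1 andbT -ltnS ltn_divLR ?expn_gt0 //.
by move: h2; rewrite expnS; nia.
Qed.

Section Blocks.
Variables N K : nat.

Definition block_id := ('I_K * 'I_N.+1)%type.

Definition active (o : seq 'I_N) (b : block_id) : bool :=
  odd (size o %/ 2 ^ b.1) && (b.2 == dyadic_lo (size o) b.1 :> nat).

Definition block (o : seq 'I_N) (b : block_id) : {set 'I_N} :=
  [set x in o | b.2 <= index x o < b.2 + 2 ^ b.1].

Definition aligned (b : block_id) : bool := 2 ^ b.1.+1 %| b.2.

Lemma mem_block o b x : x \in block o b -> x \in o.
Proof. by rewrite inE => /andP[]. Qed.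

Lemma notin_block o b x : x \notin o -> x \notin block o b.
Proof. exact/contra/mem_block. Qed.

Lemma active_aligned o b : active o b -> aligned b.
Proof. by case/andP=> _ /eqP hlo; rewrite /aligned hlo dvdn_mull. Qed.

Lemma block_cat o s b : active o b -> block (o ++ s) b = block o b.
Proof.
case/andP=> /dyadic_lo_addn_le hle /eqP hlo; apply/setP => x.
rewrite !inE mem_cat index_cat; case: (boolP (x \in o)) => //= hx.
by case: (x \in s) => //=; apply/negP; rewrite hlo; lia.
Qed.

Lemma sum_block_id (F : block_id -> nat) :
  \sum_(b : block_id) F b = \sum_(j < K) \sum_(lo < N.+1) F (j, lo).
Proof. by rewrite pair_bigA; apply: eq_bigr => -[]. Qed.

Lemma sum_ord_eq_nat (c : nat) (a : bool) :
  \sum_(lo < N.+1) ((lo == c :> nat) && a) = (c <= N) && a.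
Proof.
case: (leqP c N) => hc /=.
  rewrite (bigD1 (Ordinal (hc : c < N.+1))) //= eqxx big1 ?addn0 // => i hi.
  by case: eqP => //= hic; case/eqP: hi; apply: val_inj.
by rewrite big1 // => i _; case: eqP => //= hic; have := ltn_ord i; lia.
Qed.

Lemma sum_active_block o x : size o <= N -> size o < 2 ^ K ->
  \sum_(b : block_id) (active o b && (x \in block o b)) = (x \in o : nat).
Proof.
move=> hN hK; case: (boolP (x \in o)) => hx; last first.
  by rewrite big1 // => b _; rewrite (negbTE (notin_block b hx)) andbF.
rewrite [RHS]/= -(@sum_in_dyadic_block K (size o) (index x o)) ?index_mem //.
rewrite sum_block_id; apply: eq_bigr => j _; set c := dyadic_lo (size o) j.
rewrite (eq_bigr (fun lo : 'I_N.+1 =>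
    ((lo == c :> nat) && in_dyadic_block (size o) (index x o) j : nat))).
  by rewrite sum_ord_eq_nat (leq_trans (leq_divM _ _) hN).
move=> lo _; rewrite /active /block inE hx /in_dyadic_block -/c /=.
by case: eqP => [->|]; rewrite ?andbF //; case: odd.
Qed.

Lemma sum_block_id_le (P : pred block_id) (lo : 'I_K -> nat) :
  (forall b, P b -> b.2 = lo b.1 :> nat) -> \sum_(b : block_id) P b <= K.
Proof.
move=> hlo; have -> : \sum_(b : block_id) P b = #|P|.
  rewrite -sum1_card [RHS]big_mkcond; apply: eq_bigr => b _.
  by rewrite unfold_in; case: (P b).
rewrite -[X in _ <= X]card_ord; apply: (@leq_card_in _ _ fst).
move=> [j1 i1] [j2 i2] h1 h2 /= hj; rewrite hj; congr pair; apply: val_inj.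
by move: (hlo _ h1) (hlo _ h2) => /= -> ->; rewrite hj.
Qed.

Lemma sum_active_le o : \sum_(b : block_id) active o b <= K.
Proof. by apply: (@sum_block_id_le _ (dyadic_lo (size o))) => b /andP[_ /eqP]. Qed.

Lemma sum_aligned_block_le o x :
  \sum_(b : block_id) (aligned b && (x \in block o b)) <= K.
Proof.
apply: (@sum_block_id_le _ (dyadic_lo (index x o))) => b /andP[hal].
by rewrite inE => /andP[_ hr]; rewrite (dyadic_lo_aligned hal hr).
Qed.

Lemma sum_aligned_card_block o :
  \sum_(b : block_id) aligned b * #|block o b| <= K * #|o|.
Proof.
have -> : \sum_(b : block_id) aligned b * #|block o b| =
    \sum_(x : 'I_N) \sum_(b : block_id) (aligned b && (x \in block o b)).
  rewrite exchange_big; apply: eq_bigr => b _.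
  rewrite -sum1_card big_mkcond big_distrr; apply: eq_bigr => x _.
  by case: (aligned b); case: (x \in block o b).
rewrite -sum1_card big_distrr [X in _ <= X]big_mkcond; apply: leq_sum => x _.
case: ifP => hx; first by rewrite /= muln1 sum_aligned_block_le.
by rewrite big1 // => b _; rewrite (negbTE (notin_block b (negbT hx))) andbF.
Qed.

End Blocks.

Section Arrival.
Variables (N : nat) (U : nat -> {set 'I_N}).

Fixpoint arrival (k : nat) : seq 'I_N :=
  if k is k'.+1 then
    arrival k' ++ [seq x <- enum 'I_N | (x \in U k) && (x \notin arrival k')]
  else [seq x <- enum 'I_N | x \in U 0].

Lemma arrival_prefix k t : k <= t -> exists s, arrival t = arrival k ++ s.
Proof.
elim: t => [|t IH]; first by rewrite leqn0 => /eqP->; exists [::]; rewrite cats0.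
rewrite leq_eqVlt => /predU1P[->|/IH[s hs]]; first by exists [::]; rewrite cats0.
by eexists; rewrite /= hs -catA.
Qed.

Lemma uniq_arrival k : uniq (arrival k).
Proof.
elim: k => [|k IH] /=; first by rewrite filter_uniq ?enum_uniq.
rewrite cat_uniq IH filter_uniq ?enum_uniq // andbT.
by apply/hasPn => x; rewrite mem_filter => /andP[/andP[]].
Qed.

Lemma size_arrival_le k : size (arrival k) <= N.
Proof. by rewrite -(card_uniqP (uniq_arrival k)) -[X in _ <= X]card_ord max_card. Qed.

Lemma mem_arrival k x : insertion_only U -> (x \in arrival k) = (x \in U k).
Proof.
move=> hU; elim: k => [|k IH] /=; first by rewrite mem_filter mem_enum andbT.
rewrite mem_cat mem_filter mem_enum andbT IH.
by case: (boolP (x \in U k)) => [/(subsetP (hU k))->|_] //=; rewrite andbT.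
Qed.

End Arrival.

Lemma arrival_ext N (U1 U2 : nat -> {set 'I_N}) k :
  (forall i, i <= k -> U1 i = U2 i) -> arrival U1 k = arrival U2 k.
Proof.
elim: k => [|k IH] hU /=; first by rewrite hU.
by rewrite IH ?hU // => i hi; apply: hU; apply: leqW.
Qed.

Local Open Scope ring_scope.

Lemma sqrtr_le_sqr (R : rcfType) (a b : R) : 0 <= b -> (Num.sqrt a <= b) = (a <= b ^+ 2).
Proof. by move=> hb; rewrite -{1}(ger0_norm hb) -sqrtr_sqr ler_sqrt ?sqr_ge0. Qed.


Section Gamma2.
Variable R : realType.

Lemma norm2inf_ge0 p k (L : 'M[R]_(p, k)) : 0 <= norm2inf L.
Proof. exact: bigmax_ge_id. Qed.

Lemma norm12_ge0 k n (M : 'M[R]_(k, n)) : 0 <= norm12 M.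
Proof. exact: bigmax_ge_id. Qed.

Lemma norm12_restr_le k n (M : 'M[R]_(k, n)) B : norm12 (restr M B) <= norm12 M.
Proof.
apply: bigmax_le => [|j _]; first exact: norm12_ge0.
apply: le_trans (le_bigmax _ _ j); apply: ler_wsqrtr; apply: ler_sum => i _.
by rewrite mxE; case: (j \in B); rewrite ?expr0n ?sqr_ge0.
Qed.

Lemma mulmx_restr p k n (L : 'M[R]_(p, k)) (M : 'M[R]_(k, n)) B :
  L *m restr M B = restr (L *m M) B.
Proof.
apply/matrixP => i j; rewrite !mxE; case: ifP => hj.
  by apply: eq_bigr => l _; rewrite mxE hj.
by rewrite big1 // => l _; rewrite mxE hj mulr0.
Qed.

Lemma gamma2_restr_le p n (A : 'M[R]_(p, n)) B : gamma2 (restr A B) <= gamma2 A.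
Proof.
apply: lb_le_inf => [|_ [k [L [M [<- ->]]]]].
  by exists (norm2inf A * norm12 (1%:M : 'M[R]_n)), n, A, 1%:M; rewrite mulmx1.
apply: le_trans (ler_wpM2l (norm2inf_ge0 L) (norm12_restr_le M B)).
apply: ge_inf; last by exists k, L, (restr M B); rewrite mulmx_restr.
by exists 0 => _ [k' [L' [M' [_ ->]]]]; rewrite mulr_ge0 ?norm2inf_ge0 ?norm12_ge0.
Qed.

Lemma gamma2_castmx p p' n (e : p = p') (A : 'M[R]_(p, n)) :
  gamma2 (castmx (e, erefl n) A) = gamma2 A.
Proof. by case: p' / e; rewrite castmx_id. Qed.

Lemma mx_of_rows_restr n (rs : seq 'rV[R]_n) B :
  mx_of_rows [seq restr_row r B | r <- rs] =
  castmx (esym (size_map _ rs), erefl n) (restr (mx_of_rows rs) B).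
Proof.
apply/matrixP => i j; rewrite castmxE !mxE /=.
rewrite (nth_map 0) ?mxE ?cast_ord_id //.
by rewrite -(size_map (fun r => restr_row r B) rs) ltn_ord.
Qed.

Lemma gamma2_rows_restr_le n (rs : seq 'rV[R]_n) B :
  gamma2_rows [seq restr_row r B | r <- rs] <= gamma2_rows rs.
Proof. by rewrite /gamma2_rows mx_of_rows_restr gamma2_castmx gamma2_restr_le. Qed.

End Gamma2.

Section OnlineFactorization.
Variables (R : realType) (n : nat).

Lemma Rfactor_cat (alg : online_alg R n) ins t t' : (t <= t')%N ->
  exists s, Rfactor alg ins t' = Rfactor alg ins t ++ s.
Proof.
move=> htt'; rewrite /Rfactor -(subnKC (htt' : t.+1 <= t'.+1)%N).
by rewrite iotaD map_cat flatten_cat; eexists.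
Qed.

Lemma nth_Rfactor (alg : online_alg R n) ins t t' i : (t <= t')%N ->
  (i < size (Rfactor alg ins t))%N ->
  nth 0 (Rfactor alg ins t') i = nth 0 (Rfactor alg ins t) i.
Proof. by move=> /(Rfactor_cat alg ins)[s ->] hi; rewrite nth_cat hi. Qed.

Lemma size_Rfactor_le (alg : online_alg R n) ins t t' : (t <= t')%N ->
  (size (Rfactor alg ins t) <= size (Rfactor alg ins t'))%N.
Proof. by move=> /(Rfactor_cat alg ins)[s ->]; rewrite size_cat leq_addr. Qed.

Lemma size_rows_of m (A : 'M[R]_(m, n)) : size (rows_of A) = m.
Proof. by rewrite size_map size_enum_ord. Qed.

Lemma rows_of_restr m (A : 'M[R]_(m, n)) B :
  rows_of (restr A B) = [seq restr_row r B | r <- rows_of A].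
Proof. by rewrite -map_comp; apply: eq_map => i; apply/rowP => j; rewrite !mxE. Qed.

Lemma restr_row_id (q : 'rV[R]_n) B : restr_row (restr_row q B) B = restr_row q B.
Proof. by apply/rowP => j; rewrite !mxE; case: (j \in B). Qed.

Lemma restr_row_lincomb (l : seq R) (rs : seq 'rV[R]_n) B :
  restr_row (lincomb l rs) B = \sum_(i < size rs) l`_i *: restr_row rs`_i B.
Proof.
apply/rowP => j; rewrite [LHS]mxE !summxE.
by case: ifP => hj; [apply: eq_bigr | rewrite big1 //] => i _; rewrite !mxE hj ?mulr0.
Qed.

Lemma lincomb_map T (x0 : T) (f : T -> R) (g : T -> 'rV[R]_n) s :
  lincomb (map f s) (map g s) = \sum_(p <- s) f p *: g p.
Proof.
rewrite /lincomb size_map (big_nth x0) big_mkord.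
by apply: eq_bigr => i _; rewrite !(nth_map x0).
Qed.

Lemma norm2_map T (f : T -> R) s : norm2 (map f s) = Num.sqrt (\sum_(p <- s) f p ^+ 2).
Proof. by rewrite /norm2 big_map. Qed.

Lemma frob_map T (g : T -> 'rV[R]_n) s :
  frob (map g s) = Num.sqrt (\sum_(p <- s) \sum_(j < n) g p 0 j ^+ 2).
Proof. by rewrite /frob big_map. Qed.


Definition gamma2_prefixes_le (rs : seq 'rV[R]_n) (gamma : R) (t : nat) : Prop :=
  forall s, (0 < s <= t)%N -> gamma2_rows (take s rs) <= gamma.

Lemma gamma2_prefixes_le_leq rs gamma t t' : (t' <= t)%N ->
  gamma2_prefixes_le rs gamma t -> gamma2_prefixes_le rs gamma t'.
Proof. by move=> ht' hle s /andP[hs0 hst]; apply: hle; rewrite hs0 (leq_trans hst). Qed.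

Lemma solves_avg_spec m (alg : online_alg R n) (A : 'M[R]_(m, n)) gamma C budget t :
  solves_avg alg A gamma C budget -> (0 < t <= m)%N ->
  gamma2_prefixes_le (rows_of A) gamma t ->
  let l := ell_of (alg (take t (rows_of A))) in
  let Rt := Rfactor alg (rows_of A) t in
  [/\ size l = size Rt, lincomb l Rt = nth 0 (rows_of A) t.-1,
      frob Rt <= budget & norm2 l <= C * gamma].
Proof.
move=> halg /andP[ht0 htm] hle.
have hstep s : (0 < s <= t)%N -> is_step (alg (take s (rows_of A))).
  elim/ltn_ind: s => s IH /andP[hs0 hst].
  have := halg s; rewrite hs0 (leq_trans hst htm) => /(_ isT).
  have hprev s' : (0 < s' < s)%N -> is_step (alg (take s' (rows_of A))).
    by case/andP=> hs'0 hs's; apply: IH; rewrite // hs'0 (leq_trans (ltnW hs's)).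
  move=> /(_ hprev); case: (alg _) => // hgt.
  by have := hle s; rewrite hs0 hst => /(_ isT); rewrite leNgt hgt.
have hprev s : (0 < s < t)%N -> is_step (alg (take s (rows_of A))).
  by case/andP=> hs0 hst; apply: hstep; rewrite hs0 ltnW.
have := halg t; rewrite ht0 htm => /(_ isT hprev).
have := hstep t; rewrite ht0 leqnn => /(_ isT).
case E: (alg _) => // [nr l] _ [hsize hcomb hfrob hnorm]; split => //.
by have := hnorm t; rewrite ht0 leqnn E; apply.
Qed.

End OnlineFactorization.


Lemma sum_restr_row_active_blocks (R : realType) N K (o : seq 'I_N) (q : 'rV[R]_N) :
  (size o <= N)%N -> (size o < 2 ^ K)%N ->
  \sum_(b : block_id N K) (if active o b then restr_row q (block o b) else 0) =
  restr_row q [set x in o].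
Proof.
move=> hN hK; apply/rowP => x; rewrite summxE [RHS]mxE inE -mulrb.
rewrite -(sum_active_block x hN hK) -sumrMnr; apply: eq_bigr => b _.
by case: (active o b); rewrite !mxE ?mulr0n //; case: (x \in block o b).
Qed.

Lemma sum_iota_telescope (V : nmodType) (d : nat -> nat) (F : nat -> V) t :
  d 0%N = 0%N -> (forall k, (d k <= d k.+1)%N) ->
  \sum_(k <- iota 1 t) \sum_(d k.-1 <= i < d k) F i = \sum_(0 <= i < d t) F i.
Proof.
move=> d0 dS; elim: t => [|t IH]; first by rewrite big_nil d0 big_geq.
by rewrite -[in iota _ t.+1](addn1 t) iotaD big_cat big_seq1 IH add1n -big_cat_nat.
Qed.

Section Construction.
Variables (R : realType) (m N : nat) (Q : 'M[R]_(m, N)) (gamma : R).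
Variable base : {set 'I_N} -> online_alg R N.

Local Notation K := (trunc_log 2 N).+1.

Definition base_rows B := rows_of (restr Q B).
Definition base_Rfactor B t := Rfactor (base B) (base_rows B) t.
Definition base_ell B t := ell_of (base B (take t (base_rows B))).

Definition ever_active (U : nat -> {set 'I_N}) t (b : block_id N K) : bool :=
  has (fun s => active (arrival U s) b) (iota 1 t).

(* Once a block has been active, its right factor is mirrored in full, also at
   times when the block is inactive. *)
Definition emitted U t (b : block_id N K) : nat :=
  if ever_active U t b then size (base_Rfactor (block (arrival U t) b) t) else 0.

(* The slot (b, B, i) stands for row i of the right factor of the run on the
   column set B of block b. *)
Definition slot := (block_id N K * {set 'I_N} * nat)%type.

Definition new_slots U k : seq slot :=
  flatten [seq [seq (b, block (arrival U k) b, i)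
               | i <- index_iota (emitted U k.-1 b) (emitted U k b)]
          | b <- enum {: block_id N K}].

Definition slots U t : seq slot := flatten [seq new_slots U k | k <- iota 1 t].

Definition scale : R := Num.sqrt K%:R.

(* Right factors only grow, so row i may be read off at the final time m. *)
Definition slot_row (p : slot) : 'rV[R]_N :=
  scale^-1 *: restr_row (nth 0 (base_Rfactor p.1.2 m) p.2) p.1.2.

Definition slot_coef U t (p : slot) : R :=
  if active (arrival U t) p.1.1 then scale * nth 0 (base_ell p.1.2 t) p.2 else 0.

Definition alg : online_alg_ins R N := fun Us pre =>
  let t := size pre in
  let U := nth set0 Us in
  if t == 0%N then Step [::] [::]
  else if `[< gamma < gamma2_rows pre >] then Assert R N
  else Step (map slot_row (new_slots U t)) (map (slot_coef U t) (slots U t)).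

Section Locality.
Variables (U1 U2 : nat -> {set 'I_N}) (t : nat).
Hypothesis U12 : forall i, (i <= t)%N -> U1 i = U2 i.

Lemma arrival_agree k : (k <= t)%N -> arrival U1 k = arrival U2 k.
Proof. by move=> hk; apply: arrival_ext => i hi; apply: U12 (leq_trans hi hk). Qed.

Lemma emitted_agree k : (k <= t)%N -> emitted U1 k =1 emitted U2 k.
Proof.
move=> hk b; rewrite /emitted arrival_agree //; congr (if _ then _ else _).
apply: eq_in_has => s; rewrite mem_iota add1n ltnS => /andP[_ hs].
by rewrite arrival_agree // (leq_trans hs).
Qed.

Lemma new_slots_agree k : (k <= t)%N -> new_slots U1 k = new_slots U2 k.
Proof.
move=> hk; rewrite /new_slots arrival_agree //; congr flatten; apply: eq_map => b.
by rewrite !emitted_agree // (leq_trans (leq_pred k)).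
Qed.

Lemma slots_agree : slots U1 t = slots U2 t.
Proof.
congr flatten; apply/eq_in_map => k; rewrite mem_iota add1n ltnS => /andP[_ hk].
exact: new_slots_agree.
Qed.

Lemma slot_coef_agree : slot_coef U1 t =1 slot_coef U2 t.
Proof. by move=> p; rewrite /slot_coef arrival_agree. Qed.

End Locality.

Lemma alg_sets_upto U t : (0 < t <= m)%N ->
  alg (sets_upto U t) (take t (rows_of Q)) =
  if `[< gamma < gamma2_rows (take t (rows_of Q)) >] then Assert R N
  else Step (map slot_row (new_slots U t)) (map (slot_coef U t) (slots U t)).
Proof.
case/andP=> ht0 htm; rewrite /alg size_takel ?size_rows_of // eqn0Ngt ht0 /=.
set V := nth _ (sets_upto U t).
have U12 i : (i <= t)%N -> V i = U i.
  by move=> hi; rewrite /V (nth_map 0) ?size_iota // nth_iota.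
by rewrite (new_slots_agree U12) // (eq_map (slot_coef_agree U12)) (slots_agree U12).
Qed.

Lemma ever_active_block U k t b : ever_active U k b -> (k <= t)%N ->
  block (arrival U k) b = block (arrival U t) b.
Proof.
case/hasP=> s; rewrite mem_iota add1n ltnS => /andP[_ hsk] hact hkt.
have [o1 ->] := arrival_prefix U hsk; have [o2 ->] := arrival_prefix U (leq_trans hsk hkt).
by rewrite !block_cat.
Qed.

Lemma ever_active_aligned U t b : ever_active U t b -> aligned b.
Proof. by case/hasP=> s _ /active_aligned. Qed.

Lemma emitted_leS U k b : (emitted U k b <= emitted U k.+1 b)%N.
Proof.
rewrite /emitted; case: ifP => // hev.
have -> : ever_active U k.+1 b.
  by case/hasP: hev => s hs hact; apply/hasP; exists s; move: hs; rewrite ?mem_iota; lia.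
by rewrite (ever_active_block hev (leqnSn k)) size_Rfactor_le.
Qed.

Lemma emitted_active U t b : (0 < t)%N -> active (arrival U t) b ->
  emitted U t b = size (base_Rfactor (block (arrival U t) b) t).
Proof.
move=> ht hact; rewrite /emitted ifT //.
by apply/hasP; exists t; rewrite // mem_iota add1n ltnS ht leqnn.
Qed.

Lemma sum_slots (V : nmodType) U t (F : slot -> V) :
  \sum_(p <- slots U t) F p =
  \sum_(b : block_id N K) \sum_(0 <= i < emitted U t b) F (b, block (arrival U t) b, i).
Proof.
rewrite /slots big_flatten big_map.
transitivity (\sum_(k <- iota 1 t) \sum_(b : block_id N K)
    \sum_(emitted U k.-1 b <= i < emitted U k b) F (b, block (arrival U t) b, i)).
  apply: eq_big_seq => k; rewrite mem_iota add1n ltnS => /andP[_ hkt].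
  rewrite /new_slots big_flatten big_map big_enum; apply: eq_bigr => b _.
  rewrite big_map; case hev: (ever_active U k b); first by rewrite (ever_active_block hev hkt).
  by rewrite {2 4}/emitted hev !big_geq.
rewrite exchange_big; apply: eq_bigr => b _.
by apply: sum_iota_telescope => // k; apply: emitted_leS.
Qed.

Lemma slot_set_sub U t p : p \in slots U t -> p.1.2 \subset [set x in arrival U t].
Proof.
case/flattenP=> ps /mapP[k hk ->] /flattenP[qs /mapP[b _ ->] /mapP[i _ ->]] /=.
move: hk; rewrite mem_iota add1n ltnS => /andP[_ hkt].
apply/subsetP => x /mem_block; have [o ->] := arrival_prefix U hkt.
by rewrite inE mem_cat => ->.
Qed.

Lemma scale_sqr : scale ^+ 2 = K%:R.
Proof. by rewrite sqr_sqrtr ?ler0n. Qed.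

Lemma scale_neq0 : scale != 0.
Proof. by rewrite gt_eqF // sqrtr_gt0 ltr0n. Qed.

Lemma alg_step U t : (0 < t <= m)%N -> gamma2_prefixes_le (rows_of Q) gamma t ->
  alg (sets_upto U t) (take t (rows_of Q)) =
  Step (map slot_row (new_slots U t)) (map (slot_coef U t) (slots U t)).
Proof.
move=> ht hG; rewrite alg_sets_upto //; case: asboolP => // hgt.
by have := hG t; rewrite leqnn andbT; case/andP: ht => -> _ /(_ isT); rewrite leNgt hgt.
Qed.

Variable C : R.
Hypotheses (hgamma : 0 < gamma) (hC : 0 < C).
Hypothesis hbase :
  forall B, solves_avg (base B) (restr Q B) gamma C (Num.sqrt #|B|%:R).

Section Correctness.
Variables (U : nat -> {set 'I_N}) (t : nat).
Hypotheses (hU : insertion_only U) (ht : (0 < t <= m)%N).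
Hypothesis hG : gamma2_prefixes_le (rows_of Q) gamma t.

Let htm : (t <= m)%N. Proof. by case/andP: ht. Qed.
Let ht0 : (0 < t)%N. Proof. by case/andP: ht. Qed.

Lemma base_spec B :
  [/\ size (base_ell B t) = size (base_Rfactor B t),
      lincomb (base_ell B t) (base_Rfactor B t) = restr_row (nth 0 (rows_of Q) t.-1) B,
      frob (base_Rfactor B t) <= Num.sqrt #|B|%:R
    & norm2 (base_ell B t) <= C * gamma].
Proof.
have hGB : gamma2_prefixes_le (base_rows B) gamma t.
  move=> s hs; rewrite /base_rows rows_of_restr -map_take.
  exact: le_trans (gamma2_rows_restr_le _ _) (hG hs).
have [] := solves_avg_spec (@hbase B) ht hGB.
rewrite -/(base_rows B) -/(base_Rfactor B t) -/(base_ell B t) => -> -> -> ->; split => //.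
by rewrite /base_rows rows_of_restr (nth_map 0) // size_rows_of; case: (t) ht0 htm.
Qed.

Lemma lincomb_slots :
  lincomb (map (slot_coef U t) (slots U t)) (map slot_row (slots U t)) =
  restr_row (nth 0 (rows_of Q) t.-1) (U t).
Proof.
have hUt : [set x in arrival U t] = U t by apply/setP => x; rewrite inE mem_arrival.
have hK : (size (arrival U t) < 2 ^ K)%N.
  exact: leq_ltn_trans (size_arrival_le U t) (trunc_log_ltn _ _).
rewrite (lincomb_map (ord0, ord0, set0, 0%N)) sum_slots -hUt.
rewrite -(sum_restr_row_active_blocks _ (size_arrival_le U t) hK); apply: eq_bigr => b _.
rewrite /slot_coef /=; case: ifP => hact; last by rewrite big1 // => i _; rewrite scale0r.
set B := block _ b; have [_ hcomb _ _] := base_spec B.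
rewrite emitted_active // -[RHS]restr_row_id -hcomb restr_row_lincomb big_mkord.
apply: eq_bigr => i _; rewrite /slot_row /= scalerA mulrAC mulfV ?scale_neq0 // mul1r.
by rewrite (nth_Rfactor htm (ltn_ord i)).
Qed.

Lemma frob_slots : frob (map slot_row (slots U t)) <= Num.sqrt #|U t|%:R.
Proof.
have hK : 0 < K%:R :> R by rewrite ltr0n.
rewrite frob_map ler_wsqrtr // sum_slots.
have block_le b : \sum_(0 <= i < emitted U t b) \sum_(j < N)
    slot_row (b, block (arrival U t) b, i) 0 j ^+ 2
    <= (aligned b * #|block (arrival U t) b|)%:R / K%:R.
  rewrite /emitted; case: ifP => hev; last by rewrite big_geq // divr_ge0 ?ler0n.
  rewrite (ever_active_aligned hev) mul1n; set B := block _ b; have [_ _ hfrob _] := base_spec B.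
  move: hfrob; rewrite /frob ler_sqrt ?ler0n // (big_nth 0) => hfrob.
  rewrite ler_pdivlMr // mulr_suml; apply: le_trans _ hfrob.
  apply: ler_sum_nat => i hi; rewrite mulr_suml; apply: ler_sum => j _.
  rewrite /slot_row /= !mxE (nth_Rfactor htm hi) exprMn exprVn scale_sqr mulrAC.
  by rewrite mulVf ?gt_eqF // mul1r; case: (j \in B); rewrite ?expr0n ?sqr_ge0.
apply: le_trans (ler_sum _ (fun b _ => block_le b)) _.
rewrite -mulr_suml -natr_sum ler_pdivrMr // -natrM ler_nat mulnC.
rewrite -(eq_card (fun x => mem_arrival t x hU)).
exact: sum_aligned_card_block.
Qed.

Lemma norm2_slot_coefs : norm2 (map (slot_coef U t) (slots U t)) <= K%:R * C * gamma.
Proof.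
have hCg : 0 <= C * gamma by rewrite mulr_ge0 // ltW.
rewrite norm2_map -mulrA sqrtr_le_sqr ?(mulr_ge0 (ler0n _ _) hCg) // sum_slots.
have block_le b :
    \sum_(0 <= i < emitted U t b) slot_coef U t (b, block (arrival U t) b, i) ^+ 2
    <= (active (arrival U t) b)%:R * (K%:R * (C * gamma) ^+ 2).
  rewrite /slot_coef /=; case hact: (active _ b) => /=; last first.
    by rewrite big1 ?mul0r // => i _; rewrite expr0n.
  set B := block _ b; have [hsize _ _ hnorm] := base_spec B.
  rewrite mul1r emitted_active // -hsize.
  under eq_bigr => i _ do rewrite exprMn scale_sqr.
  rewrite -mulr_sumr ler_wpM2l ?ler0n // -sqrtr_le_sqr //.
  by move: hnorm; rewrite /norm2 (big_nth 0).
apply: le_trans (ler_sum _ (fun b _ => block_le b)) _.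
have -> : (K%:R * (C * gamma)) ^+ 2 = K%:R * (K%:R * (C * gamma) ^+ 2) :> R.
  by rewrite [LHS]exprMn [K%:R ^+ 2]expr2 -mulrA.
rewrite -mulr_suml -natr_sum ler_wpM2r ?(mulr_ge0 (ler0n _ _) (sqr_ge0 _)) //.
by rewrite ler_nat sum_active_le.
Qed.

Lemma slot_rows_supported r : r \in map slot_row (slots U t) ->
  forall j, j \notin U t -> r 0 j = 0.
Proof.
case/mapP=> p /slot_set_sub hsub -> j hj; rewrite /slot_row !mxE ifN ?mulr0 //.
by apply: contra hj => /(subsetP hsub); rewrite inE mem_arrival.
Qed.

Lemma Rfactor_ins_alg : Rfactor_ins alg U (rows_of Q) t = map slot_row (slots U t).
Proof.
rewrite /Rfactor_ins /slots /= take0 cat0s map_flatten -map_comp; congr flatten.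
apply/eq_in_map => k; rewrite mem_iota add1n ltnS => /andP[hk hkt] /=.
rewrite alg_step ?hk ?(leq_trans hkt htm) //.
exact: gamma2_prefixes_le_leq hkt hG.
Qed.

End Correctness.

Lemma solves_avg_ins_alg : solves_avg_ins alg Q gamma (K%:R * C).
Proof.
move=> U hU t ht hprev; rewrite alg_sets_upto //; case: asboolP => // hle.
have hG : gamma2_prefixes_le (rows_of Q) gamma t.
  move=> s /andP[hs0]; rewrite leq_eqVlt => /predU1P[->|hst].
    by rewrite leNgt; apply/negP.
  have hsm : (0 < s <= m)%N by rewrite hs0 (leq_trans (ltnW hst)) //; case/andP: ht.
  have := hprev s; rewrite hs0 hst alg_sets_upto // => /(_ isT).
  by case: asboolP => // /negP; rewrite -leNgt.
rewrite Rfactor_ins_alg //; split; rewrite ?size_map //.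
- exact: lincomb_slots.
- exact: frob_slots.
- exact: slot_rows_supported.
move=> s /andP[hs0 hst].
have hsm : (0 < s <= m)%N by rewrite hs0 (leq_trans hst) //; case/andP: ht.
have hGs := gamma2_prefixes_le_leq hst hG.
by rewrite alg_step // norm2_slot_coefs.
Qed.

End Construction.

Lemma trunc_log2_le_log2 (R : realType) n : (0 < n)%N ->
  (trunc_log 2 n).+1%:R <= log2 (2 * n%:R : R).
Proof.
move=> hn; have hl2 : 0 < ln (2 : R) by rewrite ln_gt0 // ltr1n.
rewrite /log2 ler_pdivlMr // -addn1 natrD mulrDl mul1r lnM ?posrE ?ltr0n //.
rewrite addrC lerD2l mulr_natl -lnXn ?ltr0n // ler_ln ?posrE ?exprn_gt0 ?ltr0n //.
by rewrite -natrX ler_nat trunc_logP.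
Qed.

Lemma solves_avg_ins_width0 (R : realType) m (Q : 'M[R]_(m, 0)) gamma :
  solves_avg_ins (fun _ _ => Step [::] [::]) Q gamma 0.
Proof.
move=> U _ t _ _ /=.
have -> : Rfactor_ins (fun _ _ => Step [::] [::]) U (rows_of Q) t = [::].
  by rewrite /Rfactor_ins; elim: (iota 0 t.+1).
split=> //; first by apply/rowP => -[].
- by rewrite /frob big_nil sqrtr0 sqrtr_ge0.
- by move=> s _; rewrite /norm2 big_nil sqrtr0 mul0r.
Qed.

Theorem lemma4p7 (R : realType) (m N : nat) (Q : 'M[R]_(m, N)) (gamma C : R)
  (hgamma : 0 < gamma) (hC : 0 < C)
  (hbase : forall U' : {set 'I_N}, exists alg : online_alg R N,
      solves_avg alg (restr Q U') gamma C (Num.sqrt (#|U'|%:R))) :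
  exists C' : R, C' <= C * log2 (2 * N%:R) /\
    exists alg : online_alg_ins R N, solves_avg_ins alg Q gamma C'.
Proof.
case: N Q hbase => [|N] Q hbase.
  exists 0; split; first by rewrite /log2 mulr0 ln0 // mul0r mulr0.
  by exists (fun _ _ => Step [::] [::]); apply: solves_avg_ins_width0.
have [base hsolves] := choice hbase.
exists ((trunc_log 2 N.+1).+1%:R * C); split.
  by rewrite mulrC; apply: ler_wpM2l; [exact: ltW | exact: trunc_log2_le_log2].
by exists (alg Q gamma base); apply: solves_avg_ins_alg.
Qed.
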